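(* Let $X$ be a random variable with $\mathbb{E}X=0$ and $0<\mathbb{E}|X|^3<\infty$, and let $b>0$. Then for all $\lambda,\theta>0$, $$\mathbb{E}e^{\lambda bX-\theta(bX)^2}=1+(\lambda^2/2-\theta)b^2\mathbb{E}X^2+\alpha b^3\mathbb{E}X^3+\beta b^4\mathbb{E}X^4I_{\{|bX|\le1\}}+\gamma\big(b^3\mathbb{E}|X|^3I_{\{|bX|>1\}}+b^5\mathbb{E}|X|^5I_{\{|bX|\le1\}}\big)$$ $$\le\exp\Big\{(\lambda^2/2-\theta)b^2\mathbb{E}X^2+\alpha b^3\mathbb{E}X^3+\beta b^4\mathbb{E}X^4I_{\{|bX|\le1\}}+\gamma\big(b^3\mathbb{E}|X|^3I_{\{|bX|>1\}}+b^5\mathbb{E}|X|^5I_{\{|bX|\le1\}}\big)\Big\},$$ where $\alpha=\lambda^3/6-\lambda\theta$, $\beta=\theta^2/2-\lambda^2\theta/2+\lambda^4/24$, and $\gamma$ is a number with $|\gamma|\le\max(O^{(1)}_{\lambda,\theta},O^{(2)}_{\lambda,\theta})$, where $O^{(1)}_{\lambda,\theta}=e^{\lambda^2/(4\theta)}+\lambda+|\lambda^2/2-\theta|+|\lambda^3/6-\lambda\theta|$ and $O^{(2)}_{\lambda,\theta}=\tfrac16(3\lambda\theta^2+\theta^3)+\tfrac1{24}(4\lambda^3\theta+6\lambda^2\theta^2+4\lambda\theta^3+\theta^4)+e^{\lambda^2/(4\theta)}(\lambda+\theta)^5$. *)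

From mathcomp Require Import all_boot all_order all_algebra.
From mathcomp Require Import all_classical all_reals all_analysis.
Set Implicit Arguments. Unset Strict Implicit. Unset Printing Implicit Defensive.
Import Order.TTheory GRing.Theory Num.Theory.
Local Open Scope ring_scope.

(* Real-valued expectation of a function whose expectation is known to be
   finite (under the hypotheses of the lemma all expectations used below
   are finite, so [fine] loses nothing). *)
Definition rE d (T : measurableType d) (R : realType) (P : probability T R)
  (f : T -> R) : R := fine ('E_P[f])%E.

Definition O1 (R : realType) (l t : R) : R :=
  expR (l ^+ 2 / (4 * t)) + l + `|l ^+ 2 / 2 - t| + `|l ^+ 3 / 6 - l * t|.

Definition O2 (R : realType) (l t : R) : R :=
  (3 * l * t ^+ 2 + t ^+ 3) / 6
  + (4 * l ^+ 3 * t + 6 * l ^+ 2 * t ^+ 2 + 4 * l * t ^+ 3 + t ^+ 4) / 24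
  + expR (l ^+ 2 / (4 * t)) * (l + t) ^+ 5.

From mathcomp Require Import all_boot all_order all_algebra.
From mathcomp Require Import all_classical all_reals all_analysis.
From mathcomp Require Import measurable_realfun ring lra.
Set Implicit Arguments. Unset Strict Implicit. Unset Printing Implicit Defensive.
Import Order.TTheory GRing.Theory Num.Theory.
Import numFieldNormedType.Exports.
Local Open Scope classical_set_scope.
Local Open Scope ring_scope.

(* With y = b X and g = lam y - th y^2 we have g <= lam^2 / (4 th).  For
   |y| <= 1, the Lagrange bound for the order-5 Taylor remainder of exp at g,
   |g| <= (lam + th) |y|, and the expansion of the first five terms of the
   exponential series in powers of y bound the distance from e^g to its
   degree-4 Taylor polynomial in y by O2 |y|^5; for |y| > 1 each of e^g - 1,
   lam y, y^2, y^3 is at most a constant times |y|^3, which gives O1 |y|^3.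
   Integrating (the linear term vanishes since E X = 0) shows that
   E e^g - 1 - S has modulus at most max(O1, O2) C, hence equals gamma C with
   |gamma| <= max(O1, O2); the last inequality is 1 + x <= e^x. *)

Section exp_taylor.
Variable R : realType.

Lemma is_derive_series_exp_coeff n (x : R) :
  is_derive x 1 (fun y => series (exp_coeff y) n.+1) (series (exp_coeff x) n).
Proof.
elim: n x => [|n IH] x.
  have -> : (fun y : R => series (exp_coeff y) 1) = cst 1.
    by apply/funext => y; rewrite /series /= big_nat1 /exp_coeff /= expr0 divr1.
  by rewrite /series /= big_geq //; exact: is_derive_cst.
have := is_deriveD (IH x)
  (is_deriveZ (n.+1`!%:R^-1) (is_deriveX n.+1 (is_derive_id x (1 : R)))).
have -> : (fun y : R => series (exp_coeff y) n.+1)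
          + (n.+1`!%:R^-1 *: (@id R) ^+ n.+1)
          = (fun y => series (exp_coeff y) n.+2).
  by apply/funext => y; rewrite !fctE [RHS]seriesSr; congr (_ + _); exact: mulrC.
move/is_derive_eq; apply; rewrite [RHS]seriesSr; congr (_ + _).
rewrite /exp_coeff /= -[_%:A]/(_ * 1) mulr1 -[_ *: _]/(_ * _) factS natrM invfM.
by field; rewrite addrC natr1 !pnatr_eq0 -lt0n fact_gt0.
Qed.

Lemma exp_taylor_remainder n (x : R) :
  `|expR x - series (exp_coeff x) n| <= expR (Num.max x 0) * `|x| ^+ n.
Proof.
elim: n x => [|n IH] x.
  rewrite /series /= big_geq // subr0 expr0 mulr1 ger0_norm ?expR_ge0 //.
  by rewrite ler_expR le_max lexx.
pose f (y : R) := expR y - series (exp_coeff y) n.+1.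
have df (y : R) : is_derive y 1 f (expR y - series (exp_coeff y) n).
  exact: is_deriveB (is_derive_expR y) (is_derive_series_exp_coeff n y).
have cf (a b : R) : {within `[a, b], continuous f}.
  by apply: derivable_within_continuous => y _; have [] := df y.
have f0 : f 0 = 0 by rewrite /f series_exp_coeff0 expR0 subrr.
have [x0|x0|->] := ltgtP x 0; last by rewrite normr0 expr0n mulr0 -/(f 0) f0 normr0.
- have [c /[!in_itv] /andP[xc c0]] := MVT x0 (fun y _ => df y) (cf x 0).
  rewrite f0 sub0r -/(f x) => /(congr1 Num.norm); rewrite normrN => ->.
  rewrite normrM sub0r normrN exprS [`|x| * _]mulrC mulrA.
  rewrite ler_pM2r ?normr_gt0 ?lt_eqF //; apply: le_trans (IH c) _.
  rewrite (max_r (ltW c0)); apply: ler_pM; rewrite ?expR_ge0 ?exprn_ge0 //.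
  by apply: lerXn2r; rewrite ?nnegrE // !ltr0_norm // lerN2 ltW.
- have [c /[!in_itv] /andP[c0 cx]] := MVT x0 (fun y _ => df y) (cf 0 x).
  rewrite f0 subr0 -/(f x) => ->.
  rewrite normrM subr0 exprS [`|x| * _]mulrC mulrA.
  rewrite ler_pM2r ?normr_gt0 ?gt_eqF //; apply: le_trans (IH c) _.
  rewrite (max_l (ltW c0)); apply: ler_pM; rewrite ?expR_ge0 ?exprn_ge0 //.
    by rewrite ler_expR ltW.
  by apply: lerXn2r; rewrite ?nnegrE // !gtr0_norm // ltW.
Qed.

End exp_taylor.

Section quadratic_exponent.
Variable R : realType.
Implicit Types l t y : R.

Lemma quadratic_le_max l t y : 0 < t -> l * y - t * y ^+ 2 <= l ^+ 2 / (4 * t).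
Proof.
move=> t0; rewrite -subr_ge0.
have -> : l ^+ 2 / (4 * t) - (l * y - t * y ^+ 2) = (l - 2 * t * y) ^+ 2 / (4 * t).
  by field; lra.
by rewrite divr_ge0 ?sqr_ge0 // ltW // mulr_gt0.
Qed.

(* The degree-4 Taylor polynomial of [expR (l * y - t * y ^+ 2)] in [y], cut
   down to degree 3 when [|y| > 1]. *)
Definition exp_quad_taylor l t y : R :=
  1 + l * y + (l ^+ 2 / 2 - t) * y ^+ 2 + (l ^+ 3 / 6 - l * t) * y ^+ 3
  + (if `|y| <= 1 then (t ^+ 2 / 2 - l ^+ 2 * t / 2 + l ^+ 4 / 24) * y ^+ 4
     else 0).

Definition exp_quad_weight y : R :=
  (if 1 < `|y| then `|y| ^+ 3 else 0) + (if `|y| <= 1 then `|y| ^+ 5 else 0).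

Lemma O1_ge0 l t : 0 <= l -> 0 <= O1 l t.
Proof. by move=> l0; rewrite /O1 !addr_ge0 ?expR_ge0. Qed.

Lemma exp_quad_weight_ge0 y : 0 <= exp_quad_weight y.
Proof. by rewrite /exp_quad_weight addr_ge0 //; case: ifP. Qed.

Lemma series_exp_coeff5_quad l t y :
  series (exp_coeff (l * y - t * y ^+ 2)) 5 =
  1 + l * y + (l ^+ 2 / 2 - t) * y ^+ 2 + (l ^+ 3 / 6 - l * t) * y ^+ 3
  + (t ^+ 2 / 2 - l ^+ 2 * t / 2 + l ^+ 4 / 24) * y ^+ 4
  + y ^+ 5 * ((3 * l * t ^+ 2 - t ^+ 3 * y) / 6
    + (- 4 * l ^+ 3 * t + 6 * l ^+ 2 * t ^+ 2 * y - 4 * l * t ^+ 3 * y ^+ 2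
       + t ^+ 4 * y ^+ 3) / 24).
Proof.
rewrite /series /exp_coeff /= !big_nat_recr //= big_geq //= !factS fact0.
by rewrite !natrM; field.
Qed.

Lemma exp_quad_remainder_le l t y : 0 <= l -> 0 <= t -> `|y| <= 1 ->
  `|(3 * l * t ^+ 2 - t ^+ 3 * y) / 6
    + (- 4 * l ^+ 3 * t + 6 * l ^+ 2 * t ^+ 2 * y - 4 * l * t ^+ 3 * y ^+ 2
       + t ^+ 4 * y ^+ 3) / 24|
  <= (3 * l * t ^+ 2 + t ^+ 3) / 6
     + (4 * l ^+ 3 * t + 6 * l ^+ 2 * t ^+ 2 + 4 * l * t ^+ 3 + t ^+ 4) / 24.
Proof.
move=> l0 t0 y1.
have scaled (c p : R) : 0 <= c -> `|p| <= 1 -> - c <= c * p <= c.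
  move=> c0; rewrite ler_norml => /andP[p1 p2].
  by rewrite -mulrN1 ler_wpM2l // -[X in _ <= X]mulr1 ler_wpM2l.
have /andP[t3y_ge t3y_le] := scaled (t ^+ 3) y (exprn_ge0 _ t0) y1.
have /andP[l2t2y_ge l2t2y_le] := scaled (6 * l ^+ 2 * t ^+ 2) y
  ltac:(by rewrite !mulr_ge0 ?exprn_ge0) y1.
have /andP[lt3y2_ge lt3y2_le] := scaled (4 * l * t ^+ 3) (y ^+ 2)
  ltac:(by rewrite !mulr_ge0 ?exprn_ge0) ltac:(by rewrite normrX exprn_ile1).
have /andP[t4y3_ge t4y3_le] := scaled (t ^+ 4) (y ^+ 3)
  (exprn_ge0 _ t0) ltac:(by rewrite normrX exprn_ile1).
have l3t : 0 <= l ^+ 3 * t by rewrite mulr_ge0 ?exprn_ge0.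
have lt2 : 0 <= l * t ^+ 2 by rewrite mulr_ge0 ?exprn_ge0.
by rewrite ler_norml; apply/andP; split; lra.
Qed.

Lemma exp_quad_taylor_small l t y : 0 <= l -> 0 < t -> `|y| <= 1 ->
  `|expR (l * y - t * y ^+ 2) - exp_quad_taylor l t y| <= O2 l t * `|y| ^+ 5.
Proof.
move=> l0 t0 y1; set g := l * y - t * y ^+ 2.
have g_le : `|g| <= (l + t) * `|y|.
  rewrite /g (_ : l * y - t * y ^+ 2 = y * (l - t * y)); last by ring.
  rewrite normrM mulrC ler_wpM2r //; apply: (le_trans (ler_normB _ _)).
  rewrite normrM (ger0_norm l0) (ger0_norm (ltW t0)) lerD2l.
  by rewrite -[X in _ <= X]mulr1 ler_wpM2l // ltW.
have taylor : `|expR g - series (exp_coeff g) 5|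
              <= expR (l ^+ 2 / (4 * t)) * (l + t) ^+ 5 * `|y| ^+ 5.
  apply: le_trans (exp_taylor_remainder 5 g) _; rewrite -mulrA.
  apply: ler_pM; rewrite ?expR_ge0 ?exprn_ge0 //.
    rewrite ler_expR ge_max quadratic_le_max //=.
    by rewrite divr_ge0 ?sqr_ge0 // ltW // mulr_gt0.
  by rewrite -exprMn; apply: lerXn2r; rewrite ?nnegrE ?mulr_ge0 ?addr_ge0 // ltW.
have poly := exp_quad_remainder_le l0 (ltW t0) y1.
have := series_exp_coeff5_quad l t y; rewrite -/g.
set Q := (X in y ^+ 5 * X) in poly * => series5.
rewrite /exp_quad_taylor ifT // (_ : expR g - _ =
  (expR g - series (exp_coeff g) 5) + y ^+ 5 * Q); last by rewrite series5; ring.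
apply: (le_trans (ler_normD _ _)); rewrite /O2 mulrDl addrC lerD //.
by rewrite normrM normrX mulrC ler_wpM2r ?exprn_ge0.
Qed.

Lemma exp_quad_taylor_large l t y : 0 <= l -> 0 < t -> 1 < `|y| ->
  `|expR (l * y - t * y ^+ 2) - exp_quad_taylor l t y| <= O1 l t * `|y| ^+ 3.
Proof.
move=> l0 t0 y1; set g := l * y - t * y ^+ 2.
rewrite /exp_quad_taylor ifF ?addr0; last by apply/negbTE; rewrite -ltNge.
set e := expR (l ^+ 2 / (4 * t)); set c2 := l ^+ 2 / 2 - t.
set al := l ^+ 3 / 6 - l * t; set u := `|y|.
have e1 : 1 <= e by rewrite -expR0 ler_expR divr_ge0 ?sqr_ge0 // ltW // mulr_gt0.
have eg : expR g <= e by rewrite ler_expR quadratic_le_max.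
have eg0 := expR_gt0 g.
have u13 : u <= u ^+ 3 by rewrite -[X in X <= _]expr1 ler_eXn2l.
have u23 : u ^+ 2 <= u ^+ 3 by rewrite ler_eXn2l.
have exp_le : `|expR g - 1| <= e * u ^+ 3.
  apply: le_trans (_ : e <= _); first by rewrite ler_norml; apply/andP; split; lra.
  by rewrite ler_peMr ?(le_trans _ e1) ?exprn_ege1 // ltW.
have lin_le : `|l * y| <= l * u ^+ 3.
  by rewrite normrM (ger0_norm l0) ler_wpM2l // ltW.
have sqr_le : `|c2 * y ^+ 2| <= `|c2| * u ^+ 3 by rewrite normrM normrX ler_wpM2l.
have cube_le : `|al * y ^+ 3| <= `|al| * u ^+ 3 by rewrite normrM normrX.
rewrite (_ : expR g - _ = expR g - 1 - l * y - c2 * y ^+ 2 - al * y ^+ 3);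
  last by ring.
have triangle (a b c d : R) : `|a - b - c - d| <= `|a| + `|b| + `|c| + `|d|.
  by do 2 (apply: le_trans (ler_normB _ _) _; rewrite lerD2r); exact: ler_normB.
apply: le_trans (triangle _ _ _ _) _.
by rewrite /O1 -/e -/c2 -/al; lra.
Qed.

Lemma exp_quad_taylor_approx l t y : 0 <= l -> 0 < t ->
  `|expR (l * y - t * y ^+ 2) - exp_quad_taylor l t y|
  <= Num.max (O1 l t) (O2 l t) * exp_quad_weight y.
Proof.
move=> l0 t0; rewrite /exp_quad_weight.
have [y1|y1] := leP `|y| 1; rewrite ?add0r ?addr0.
- apply: le_trans (exp_quad_taylor_small l0 t0 y1) _.
  by rewrite ler_wpM2r ?exprn_ge0 // le_max lexx orbT.
- apply: le_trans (exp_quad_taylor_large l0 t0 y1) _.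
  by rewrite ler_wpM2r ?exprn_ge0 // le_max lexx.
Qed.

End quadratic_exponent.

Ltac solve_measurable := lazymatch goal with
 | |- measurable_fun _ (fun x => (_)%:E) => apply/measurable_EFinP; solve_measurable
 | |- measurable_fun _ (EFin \o _) => apply/measurable_EFinP; solve_measurable
 | |- measurable_fun _ (fun x => _ + _) => apply: measurable_funD; solve_measurable
 | |- measurable_fun _ (fun x => - _) => apply: measurable_funN; solve_measurable
 | |- measurable_fun _ (fun x => _ * _) => apply: measurable_funM; solve_measurable
 | |- measurable_fun _ (fun x => _ ^+ _) => apply: measurable_funX; solve_measurable
 | |- measurable_fun _ (fun x => if _ then _ else _) =>
     apply: measurable_fun_ifT; solve_measurable
 | |- measurable_fun _ (fun x => _ <= _) => apply: measurable_fun_ler; solve_measurable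
 | |- measurable_fun _ (fun x => _ < _) => apply: measurable_fun_ltr; solve_measurable
 | |- measurable_fun _ (fun x => `|_|) =>
     apply: (measurableT_comp (@normr_measurable _ setT)); solve_measurable
 | |- measurable_fun _ (fun x => expR _) =>
     apply: (measurableT_comp (@measurable_expR _)); solve_measurable
 | _ => first [exact: measurable_funPT | exact: measurable_cst]
end.

Lemma norm_le_scale_factor (R : realFieldType) (x c M : R) :
  0 <= M -> 0 <= c -> `|x| <= M * c -> exists2 g, `|g| <= M & x = g * c.
Proof.
move=> M0; rewrite le_eqVlt => /predU1P[<- | c0] xle.
  by exists 0; rewrite ?normr0 // mul0r; apply/eqP; rewrite -normr_le0 -(mulr0 M).
exists (x / c); last by rewrite divfK // gt_eqF.
by rewrite normrM [`|c^-1|]gtr0_norm ?invr_gt0 // ler_pdivrMr.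
Qed.

Section real_integrable.
Context d (T : measurableType d) (R : realType) (mu : {measure set T -> \bar R}).
Implicit Types f g : T -> R.

Lemma integrableD_EFin f g : mu.-integrable setT (EFin \o f) ->
  mu.-integrable setT (EFin \o g) ->
  mu.-integrable setT (EFin \o (fun x => f x + g x)).
Proof. exact: integrableD. Qed.

Lemma integrableB_EFin f g : mu.-integrable setT (EFin \o f) ->
  mu.-integrable setT (EFin \o g) ->
  mu.-integrable setT (EFin \o (fun x => f x - g x)).
Proof. exact: integrableB. Qed.

Lemma integrableZl_EFin (k : R) f : mu.-integrable setT (EFin \o f) ->
  mu.-integrable setT (EFin \o (fun x => k * f x)).
Proof. exact: integrableZl. Qed.

Lemma norm_RintegralB_le f g (h : T -> R) (M : R) :
  mu.-integrable setT (EFin \o f) -> mu.-integrable setT (EFin \o g) ->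
  mu.-integrable setT (EFin \o h) -> (forall x, `|f x - g x| <= M * h x) ->
  `|\int[mu]_x f x - \int[mu]_x g x| <= M * \int[mu]_x h x.
Proof.
move=> intf intg inth fgh; rewrite -RintegralB // -RintegralZl //.
apply: le_trans (le_normr_Rintegral _ (integrableB_EFin intf intg)) _ => //.
apply: le_Rintegral => //.
- exact: integrable_norm (integrableB_EFin intf intg).
- exact: integrableZl_EFin.
Qed.

End real_integrable.

Section cube_integrable.
Context d (T : measurableType d) (R : realType) (P : probability T R).
Variable X : {RV P >-> R}.
Hypothesis X3_fin : ('E_P[(fun w => `|X w| ^+ 3)%R] < +oo)%E.

Lemma rE_Rintegral (f : T -> R) : rE P f = \int[P]_w f w.
Proof. by rewrite /rE /Rintegral unlock. Qed.

Lemma expectation_Rintegral (f : T -> R) : P.-integrable setT (EFin \o f) ->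
  ('E_P[f] = (\int[P]_w f w)%:E)%E.
Proof. by move=> intf; rewrite unlock fineK // integrable_fin_num. Qed.

Lemma integrable_1Dcube : P.-integrable setT (EFin \o (fun w => 1 + `|X w| ^+ 3)).
Proof.
apply: integrableD_EFin; first exact: finite_measure_integrable_cst.
apply/integrableP; split; first by solve_measurable.
apply: le_lt_trans X3_fin; rewrite unlock.
apply: ge0_le_integral => //=; try by solve_measurable.
by move=> w _; rewrite lee_fin normrX normr_id.
Qed.

Lemma integrable_cube_dominated (f : T -> R) (K : R) : measurable_fun setT f ->
  (forall w, `|f w| <= K * (1 + `|X w| ^+ 3)) -> P.-integrable setT (EFin \o f).
Proof.
move=> mf fK; apply: le_integrable (integrableZl_EFin K integrable_1Dcube) => //.
  exact/measurable_EFinP.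
by move=> w _; rewrite lee_fin (le_trans (fK w)) // ler_norm.
Qed.

Lemma integrable_pow k : (k <= 3)%N ->
  P.-integrable setT (EFin \o (fun w => X w ^+ k)).
Proof.
move=> k3; apply: (integrable_cube_dominated (K := 1)); first by solve_measurable.
move=> w; rewrite mul1r normrX.
have [X1|X1] := leP `|X w| 1.
  by rewrite (le_trans (exprn_ile1 _ _ X1)) // lerDl exprn_ge0.
by rewrite (le_trans (_ : _ <= `|X w| ^+ 3)) ?lerDr ?ler_eXn2l.
Qed.

End cube_integrable.

Ltac solve_integrable := repeat first
  [ assumption | exact: finite_measure_integrable_cst
  | apply: integrableD_EFin | apply: integrableZl_EFin ].

Section exp_quad_moments.
Context d (T : measurableType d) (R : realType) (P : probability T R).
Variables (X : {RV P >-> R}) (b lam th : R).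
Hypothesis X3_fin : ('E_P[(fun w => `|X w| ^+ 3)%R] < +oo)%E.
Hypotheses (b0 : 0 < b) (th0 : 0 < th).

Lemma integrable_exp_quad : P.-integrable setT
  (EFin \o (fun w => expR (lam * (b * X w) - th * (b * X w) ^+ 2))).
Proof.
apply: (integrable_cube_dominated X3_fin (K := expR (lam ^+ 2 / (4 * th)))).
  by solve_measurable.
move=> w; rewrite ger0_norm ?expR_ge0 //.
apply: le_trans (_ : expR (lam ^+ 2 / (4 * th)) <= _).
  by rewrite ler_expR quadratic_le_max.
by rewrite ler_peMr ?expR_ge0 // lerDl exprn_ge0.
Qed.

Lemma integrable_trunc_pow n : P.-integrable setT
  (EFin \o (fun w => if `|b * X w| <= 1 then X w ^+ n else 0)).
Proof.
apply: (integrable_cube_dominated X3_fin (K := b ^- n)); first by solve_measurable.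
move=> w; apply: le_trans (_ : b ^- n <= _); last first.
  by rewrite ler_peMr ?invr_ge0 ?exprn_ge0 ?(ltW b0) // lerDl exprn_ge0.
case: ifP => [bX1|_]; last by rewrite normr0 invr_ge0 exprn_ge0 // ltW.
rewrite normrX -exprVn lerXn2r ?nnegrE ?invr_ge0 ?(ltW b0) //.
by rewrite -[b^-1]mulr1 ler_pdivlMl // -(gtr0_norm b0) -normrM.
Qed.

Lemma integrable_trunc_norm_pow n : P.-integrable setT
  (EFin \o (fun w => if `|b * X w| <= 1 then `|X w| ^+ n else 0)).
Proof.
have -> : (fun w => if `|b * X w| <= 1 then `|X w| ^+ n else 0)
          = Num.norm \o (fun w => if `|b * X w| <= 1 then X w ^+ n else 0).
  by apply/funext => w /=; case: ifP; rewrite ?normrX ?normr0.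
exact/integrable_norm/integrable_trunc_pow.
Qed.

Lemma integrable_tail_cube : P.-integrable setT
  (EFin \o (fun w => if `|b * X w| > 1 then `|X w| ^+ 3 else 0)).
Proof.
apply: (integrable_cube_dominated X3_fin (K := 1)); first by solve_measurable.
move=> w; rewrite mul1r; case: ifP => _; first by rewrite normrX normr_id lerDr.
by rewrite normr0 addr_ge0 ?exprn_ge0.
Qed.

Lemma exp_quad_taylor_scaledE :
  (fun w => exp_quad_taylor lam th (b * X w)) =
  (fun w => 1 + (lam * b) * X w + ((lam ^+ 2 / 2 - th) * b ^+ 2) * X w ^+ 2
   + ((lam ^+ 3 / 6 - lam * th) * b ^+ 3) * X w ^+ 3
   + ((th ^+ 2 / 2 - lam ^+ 2 * th / 2 + lam ^+ 4 / 24) * b ^+ 4)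
     * (if `|b * X w| <= 1 then X w ^+ 4 else 0)).
Proof. by apply/funext => w; rewrite /exp_quad_taylor; case: ifP => _; ring. Qed.

Lemma exp_quad_weight_scaledE :
  (fun w => exp_quad_weight (b * X w)) =
  (fun w => b ^+ 3 * (if `|b * X w| > 1 then `|X w| ^+ 3 else 0)
          + b ^+ 5 * (if `|b * X w| <= 1 then `|X w| ^+ 5 else 0)).
Proof.
apply/funext => w; rewrite /exp_quad_weight.
by case: ifP => _; case: ifP => _; rewrite ?normrM ?(gtr0_norm b0) ?exprMn; ring.
Qed.

Lemma integrable_exp_quad_taylor :
  P.-integrable setT (EFin \o (fun w => exp_quad_taylor lam th (b * X w))).
Proof.
have := integrable_pow X3_fin (k := 1) isT.
have := integrable_pow X3_fin (k := 2) isT.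
have := integrable_pow X3_fin (k := 3) isT.
have := integrable_trunc_pow 4.
by rewrite exp_quad_taylor_scaledE => *; solve_integrable.
Qed.

Lemma integrable_exp_quad_weight :
  P.-integrable setT (EFin \o (fun w => exp_quad_weight (b * X w))).
Proof.
have := integrable_tail_cube; have := integrable_trunc_norm_pow 5.
by rewrite exp_quad_weight_scaledE => *; solve_integrable.
Qed.

Hypothesis X_mean0 : ('E_P[X] = 0)%E.

Lemma Rintegral_exp_quad_taylor :
  \int[P]_w exp_quad_taylor lam th (b * X w) =
  1 + ((lam ^+ 2 / 2 - th) * b ^+ 2 * rE P (fun w => X w ^+ 2)
       + (lam ^+ 3 / 6 - lam * th) * b ^+ 3 * rE P (fun w => X w ^+ 3)
       + (th ^+ 2 / 2 - lam ^+ 2 * th / 2 + lam ^+ 4 / 24) * b ^+ 4 *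
           rE P (fun w => if `|b * X w| <= 1 then X w ^+ 4 else 0)).
Proof.
have := integrable_pow X3_fin (k := 1) isT.
have := integrable_pow X3_fin (k := 2) isT.
have := integrable_pow X3_fin (k := 3) isT.
have := integrable_trunc_pow 4.
rewrite exp_quad_taylor_scaledE => *.
have IX : \int[P]_w X w = 0 by apply: EFin_inj; rewrite -expectation_Rintegral.
rewrite !RintegralD //; try by solve_integrable.
rewrite !RintegralZl // Rintegral_cst // (_ : fine (P setT) = 1); last first.
  by rewrite probability_setT.
by rewrite mul1r IX mulr0 addr0 !rE_Rintegral !addrA.
Qed.

Lemma Rintegral_exp_quad_weight :
  \int[P]_w exp_quad_weight (b * X w) =
  b ^+ 3 * rE P (fun w => if `|b * X w| > 1 then `|X w| ^+ 3 else 0)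
  + b ^+ 5 * rE P (fun w => if `|b * X w| <= 1 then `|X w| ^+ 5 else 0).
Proof.
have := integrable_tail_cube; have := integrable_trunc_norm_pow 5.
rewrite exp_quad_weight_scaledE => *.
by rewrite RintegralD ?RintegralZl ?rE_Rintegral //; solve_integrable.
Qed.

End exp_quad_moments.

Theorem lemma4p1 (d : measure_display) (T : measurableType d) (R : realType)
  (P : probability T R) (X : {RV P >-> R}) (b : R)
  (hmean : ('E_P[X] = 0)%E)
  (h3pos : (0 < 'E_P[(fun w => `|X w| ^+ 3)%R])%E)
  (h3fin : ('E_P[(fun w => `|X w| ^+ 3)%R] < +oo)%E)
  (hb : 0 < b) (lam th : R) (hlam : 0 < lam) (hth : 0 < th) :
  let alpha := lam ^+ 3 / 6 - lam * th in
  let beta := th ^+ 2 / 2 - lam ^+ 2 * th / 2 + lam ^+ 4 / 24 in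
  let S := (lam ^+ 2 / 2 - th) * b ^+ 2 * rE P (fun w => X w ^+ 2)
           + alpha * b ^+ 3 * rE P (fun w => X w ^+ 3)
           + beta * b ^+ 4 *
               rE P (fun w => if `|b * X w| <= 1 then X w ^+ 4 else 0) in
  let C := b ^+ 3 * rE P (fun w => if `|b * X w| > 1 then `|X w| ^+ 3 else 0)
           + b ^+ 5 * rE P (fun w => if `|b * X w| <= 1 then `|X w| ^+ 5 else 0) in
  exists gamma : R,
    `|gamma| <= Num.max (O1 lam th) (O2 lam th) /\
    ('E_P[(fun w => expR (lam * (b * X w) - th * (b * X w) ^+ 2))%R]
       = (1 + S + gamma * C)%:E)%E /\
    1 + S + gamma * C <= expR (S + gamma * C).
Proof.
move=> alpha beta S C.
have iF := integrable_exp_quad b lam h3fin hth.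
have IL : \int[P]_w exp_quad_taylor lam th (b * X w) = 1 + S :=
  Rintegral_exp_quad_taylor lam th h3fin hb hmean.
have IG : \int[P]_w exp_quad_weight (b * X w) = C :=
  Rintegral_exp_quad_weight h3fin hb.
have C0 : 0 <= C.
  by rewrite -IG; apply: Rintegral_ge0 => w _; exact: exp_quad_weight_ge0.
have : `|\int[P]_w expR (lam * (b * X w) - th * (b * X w) ^+ 2) - (1 + S)|
       <= Num.max (O1 lam th) (O2 lam th) * C.
  rewrite -IL -IG; apply: norm_RintegralB_le => //.
  - exact: integrable_exp_quad_taylor h3fin hb.
  - exact: integrable_exp_quad_weight h3fin hb.
  - by move=> w; exact: exp_quad_taylor_approx (ltW hlam) hth.
have M0 : 0 <= Num.max (O1 lam th) (O2 lam th) by rewrite le_max O1_ge0 // ltW.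
case/(norm_le_scale_factor M0 C0) => gamma gamma_le intE.
exists gamma; split => //; split.
  by rewrite expectation_Rintegral // -intE addrC subrK.
by rewrite -addrA; exact: expR_ge1Dx.
Qed.
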